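(* Let $m\ge 3$ be an integer and let $f(x_1,x_2,x_3)=a_1P_m(x_1)+a_2P_m(x_2)+a_3P_m(x_3)$ with $a_1,a_2,a_3$ positive integers. Let $L=\mathbb{Z}\mathbf{e}_1+\mathbb{Z}\mathbf{e}_2+\mathbb{Z}\mathbf{e}_3$ be a $\mathbb{Z}$-lattice with Gram matrix $(B(\mathbf{e}_i,\mathbf{e}_j))=\mathrm{diag}(a_1c^2,a_2c^2,a_3c^2)$, and let $\mathbf{v}=-\frac{d}{c}(\mathbf{e}_1+\mathbf{e}_2+\mathbf{e}_3)\in\mathbb{Q}L$. Then $f$ is regular if and only if the $\mathbb{Z}$-coset $L+\mathbf{v}$ is tight regular.
   Context: $P_m(x)=\frac{(m-2)x^2-(m-4)x}{2}$. Define $\delta=4$ if $m$ is odd, $\delta=2$ if $m\equiv2\pmod4$, $\delta=1$ if $m\equiv0\pmod4$; $c=\delta\frac{m-2}{2}$, $d=\delta\frac{m-4}{4}$. An integer $n$ is locally represented by $f$ if $f=n$ is solvable over $\mathbb{Z}_p$ for every prime $p$ and over $\mathbb{R}$; $f$ is regular if it represents (over $\mathbb{Z}$) every nonnegative integer locally represented by $f$. For the coset: $Q$ is the quadratic map of $\mathbb{Q}L$ with $B(\mathbf{x},\mathbf{y})=\frac12(Q(\mathbf{x}+\mathbf{y})-Q(\mathbf{x})-Q(\mathbf{y}))$; an integer $n$ is represented by $L+\mathbf{v}$ if $n=Q(\mathbf{x}+\mathbf{v})$ for some $\mathbf{x}\in L$, and locally represented if for every prime $p$ there is $\mathbf{x}_p\in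 L\otimes\mathbb{Z}_p$ with $Q(\mathbf{x}_p+\mathbf{v})=n$. With $\min(L+\mathbf{v})=\min\{Q(\mathbf{x}+\mathbf{v}):\mathbf{x}\in L\}$, the coset $L+\mathbf{v}$ is tight regular if it represents every locally represented integer that is $\ge\min(L+\mathbf{v})$. *)

From mathcomp Require Import all_boot all_order all_algebra.
From Stdlib Require Reals.
Set Implicit Arguments. Unset Strict Implicit. Unset Printing Implicit Defensive.
Import Order.TTheory GRing.Theory Num.Theory.
Local Open Scope ring_scope.

Definition Pm (m : nat) (x : rat) : rat :=
  (((m%:R - 2) * x ^+ 2 - (m%:R - 4) * x) / 2).

Definition fm (m a1 a2 a3 : nat) (x1 x2 x3 : rat) : rat :=
  a1%:R * Pm m x1 + a2%:R * Pm m x2 + a3%:R * Pm m x3.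

Definition twofZ (m a1 a2 a3 : nat) (x1 x2 x3 : int) : int :=
  let g := fun x : int => (m%:Z - 2) * x ^+ 2 - (m%:Z - 4) * x in
  a1%:Z * g x1 + a2%:Z * g x2 + a3%:Z * g x3.

(* A p-adic integer is represented by a compatible sequence of integers
   x_k (representing x mod p^k), x_{k+1} = x_k mod p^k. *)
Definition padic_seq (p : nat) (x : nat -> int) : Prop :=
  forall k : nat, (x k.+1 == x k %[mod (p ^ k)%:Z])%Z.

(* For an integer polynomial map F, the equation F(x1,x2,x3) = n in Z_p
   means equality of all components of the inverse limit. *)
Definition padic_solvable3 (p : nat) (F : int -> int -> int -> int) (n : int)
  : Prop :=
  exists x1 x2 x3 : nat -> int,
    [/\ padic_seq p x1, padic_seq p x2, padic_seq p x3 &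
        forall k : nat, (F (x1 k) (x2 k) (x3 k) == n %[mod (p ^ k)%:Z])%Z].

Definition real_solvable_f (m a1 a2 a3 n : nat) : Prop :=
  exists r1 r2 r3 : Rdefinitions.R,
    let P := fun r : Rdefinitions.R =>
      Rdefinitions.Rdiv
        (Rdefinitions.Rminus
           (Rdefinitions.Rmult (Rdefinitions.Rminus (Raxioms.INR m) (Raxioms.INR 2))
                               (Rdefinitions.Rmult r r))
           (Rdefinitions.Rmult (Rdefinitions.Rminus (Raxioms.INR m) (Raxioms.INR 4)) r))
        (Raxioms.INR 2) in
    Rdefinitions.Rplus
      (Rdefinitions.Rplus (Rdefinitions.Rmult (Raxioms.INR a1) (P r1))
                          (Rdefinitions.Rmult (Raxioms.INR a2) (P r2)))
      (Rdefinitions.Rmult (Raxioms.INR a3) (P r3))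
    = Raxioms.INR n.

(* n locally represented by f: solvable over every Z_p and over R.
   Over Z_p, f(x) = n is written equivalently as 2 f(x) = 2 n
   (Z_p is torsion free), so that only integer coefficients occur. *)
Definition f_locally_represents (m a1 a2 a3 n : nat) : Prop :=
  real_solvable_f m a1 a2 a3 n /\
  forall p : nat, prime p ->
    padic_solvable3 p (twofZ m a1 a2 a3) (2 * n%:Z).

Definition f_represents (m a1 a2 a3 n : nat) : Prop :=
  exists x1 x2 x3 : int, fm m a1 a2 a3 x1%:~R x2%:~R x3%:~R = n%:R.

Definition f_regular (m a1 a2 a3 : nat) : Prop :=
  forall n : nat, f_locally_represents m a1 a2 a3 n -> f_represents m a1 a2 a3 n.

Definition delta (m : nat) : int :=
  if odd m then 4 else if (m %% 4 == 2)%N then 2 else 1.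

(* c = delta (m-2)/2 and d = delta (m-4)/4; the divisions are exact *)
Definition cc (m : nat) : int := ((delta m * (m%:Z - 2)) %/ 2)%Z.
Definition dd (m : nat) : int := ((delta m * (m%:Z - 4)) %/ 4)%Z.

(* L = Z e1 + Z e2 + Z e3 with Gram matrix diag(a1 c^2, a2 c^2, a3 c^2);
   Q on QL in coordinates: Q(y) = sum a_i c^2 y_i^2. *)
Definition QL (m a1 a2 a3 : nat) (y1 y2 y3 : rat) : rat :=
  let c : rat := (cc m)%:~R in
  a1%:R * c ^+ 2 * y1 ^+ 2 + a2%:R * c ^+ 2 * y2 ^+ 2 + a3%:R * c ^+ 2 * y3 ^+ 2.

Definition vcoord (m : nat) : rat := - ((dd m)%:~R / (cc m)%:~R).

Definition Qcoset (m a1 a2 a3 : nat) (x1 x2 x3 : int) : rat :=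
  QL m a1 a2 a3 (x1%:~R + vcoord m) (x2%:~R + vcoord m) (x3%:~R + vcoord m).

Definition coset_represents (m a1 a2 a3 : nat) (n : int) : Prop :=
  exists x1 x2 x3 : int, Qcoset m a1 a2 a3 x1 x2 x3 = n%:~R.

(* Over Z_p (x in L (x) Z_p = Z_p^3): Q(x + v) = sum a_i c^2 (x_i - d/c)^2
   = sum a_i (c x_i - d)^2, a polynomial with integer coefficients. *)
Definition QcosetZ (m a1 a2 a3 : nat) (x1 x2 x3 : int) : int :=
  a1%:Z * (cc m * x1 - dd m) ^+ 2 + a2%:Z * (cc m * x2 - dd m) ^+ 2
  + a3%:Z * (cc m * x3 - dd m) ^+ 2.

Definition coset_locally_represents (m a1 a2 a3 : nat) (n : int) : Prop :=
  forall p : nat, prime p -> padic_solvable3 p (QcosetZ m a1 a2 a3) n.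

Definition coset_min (m a1 a2 a3 : nat) (mu : rat) : Prop :=
  (exists x1 x2 x3 : int, Qcoset m a1 a2 a3 x1 x2 x3 = mu) /\
  (forall x1 x2 x3 : int, mu <= Qcoset m a1 a2 a3 x1 x2 x3).

Definition coset_tight_regular (m a1 a2 a3 : nat) : Prop :=
  forall (mu : rat) (n : int), coset_min m a1 a2 a3 mu ->
    mu <= n%:~R -> coset_locally_represents m a1 a2 a3 n ->
    coset_represents m a1 a2 a3 n.

(* Completing the square, Q(x + v) = sum a_i (c x_i - d)^2 = delta c f(x) + d^2 (a1 + a2 + a3),
   because c = delta (m-2)/2 and 2d = delta (m-4)/2.  As f >= 0 = f(0) on integers, the minimum
   of L + v is D = d^2 (a1 + a2 + a3), and the integers n >= D represented by L + v, globally or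
   over every Z_p, are exactly the n = delta c k + D with k represented by f in the same sense:
   local solvability modulo p^(v_p(delta c)) for all p forces delta c | n - D, and real
   solvability of f = k is automatic for m >= 3. *)
From Stdlib Require Import Reals Lra.
From mathcomp Require Import all_boot all_order all_algebra.

Set Implicit Arguments.
Unset Strict Implicit.

Section RealSolvability.
Local Open Scope R_scope.

Lemma quadratic_root (M N t : R) : 0 < M -> 0 <= t ->
  exists r, M * (r * r) - N * r = t.
Proof.
move=> M0 t0; have D0 : 0 <= N * N + 4 * M * t by nra.
exists ((N + sqrt (N * N + 4 * M * t)) / (2 * M)).
have := sqrt_sqrt _ D0; set s := sqrt _ => ss.
have -> : M * ((N + s) / (2 * M) * ((N + s) / (2 * M))) - N * ((N + s) / (2 * M))
  = (s * s - N * N) / (4 * M) by field; lra.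
rewrite ss; field; lra.
Qed.

Lemma real_solvable_fm (m a1 a2 a3 n : nat) :
  (3 <= m)%N -> (0 < a1)%N -> real_solvable_f m a1 a2 a3 n.
Proof.
move=> /leP /le_INR m3 /leP /lt_INR a1p; rewrite /= in m3 a1p.
have n0 := pos_INR n.
have [r Hr] : exists r, (INR m - 2) * (r * r) - (INR m - 4) * r = 2 * INR n / INR a1.
  apply: quadratic_root; first lra.
  apply: Rmult_le_pos; [lra | apply/Rlt_le/Rinv_0_lt_compat; lra].
have I2 : INR 2 = 2 by rewrite /=; lra.
have I4 : INR 4 = 4 by rewrite /=; lra.
exists r, 0, 0; cbv zeta beta; rewrite I2 I4 Hr; field; lra.
Qed.

End RealSolvability.

From mathcomp Require Import zify ring lra.
Import Order.TTheory GRing.Theory Num.Theory.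
Local Open Scope ring_scope.

Lemma delta_gt0 m : (0 < delta m)%Z.
Proof. by rewrite /delta; case: odd => //; case: eqP. Qed.

Lemma cc_spec m : (2 * cc m = delta m * (m%:Z - 2))%Z.
Proof. by rewrite /cc /delta; have := modn2 m; case: odd => /=; [|case: eqP]; lia. Qed.

Lemma dd_spec m : (4 * dd m = delta m * (m%:Z - 4))%Z.
Proof. by rewrite /dd /delta; have := modn2 m; case: odd => /=; [|case: eqP]; lia. Qed.

Lemma cc_gt0 m : (3 <= m)%N -> (0 < cc m)%Z.
Proof. by move=> m3; have := cc_spec m; have := delta_gt0 m; nia. Qed.

Definition coset_scale m : int := delta m * cc m.
Definition coset_offset m a1 a2 a3 : int := dd m ^+ 2 * (a1%:Z + a2%:Z + a3%:Z).

Lemma coset_scale_gt0 m : (3 <= m)%N -> 0 < coset_scale m.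
Proof. by move=> m3; have := cc_gt0 m3; have := delta_gt0 m; rewrite /coset_scale; nia. Qed.

Lemma QcosetZ_twofZ m a1 a2 a3 x1 x2 x3 :
  2 * QcosetZ m a1 a2 a3 x1 x2 x3
  = coset_scale m * twofZ m a1 a2 a3 x1 x2 x3 + 2 * coset_offset m a1 a2 a3.
Proof.
have E (x : int) : 2 * (cc m * x - dd m) ^+ 2
    = coset_scale m * ((m%:Z - 2) * x ^+ 2 - (m%:Z - 4) * x) + 2 * dd m ^+ 2.
  transitivity (cc m * (2 * cc m) * x ^+ 2 - cc m * (4 * dd m) * x + 2 * dd m ^+ 2).
    by ring.
  by rewrite cc_spec dd_spec /coset_scale; ring.
rewrite /QcosetZ /twofZ /coset_offset /=.
transitivity (a1%:Z * (2 * (cc m * x1 - dd m) ^+ 2) + a2%:Z * (2 * (cc m * x2 - dd m) ^+ 2)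
              + a3%:Z * (2 * (cc m * x3 - dd m) ^+ 2)); first by ring.
by rewrite !E; ring.
Qed.

Lemma polygonal_int_ge0 m (x : int) : (3 <= m)%N ->
  exists2 h, (m%:Z - 2) * x ^+ 2 - (m%:Z - 4) * x = 2 * h & 0 <= h.
Proof.
move=> m3; have [q Hq] : exists q, x * (x - 1) = 2 * q.
  have := divz_eq x 2; have : (x %% 2 = 0 \/ x %% 2 = 1)%Z by lia.
  set y := (x %/ 2)%Z; case=> -> ->.
    by exists (y * (2 * y - 1)); ring.
  by exists (y * (2 * y + 1)); ring.
exists ((m%:Z - 2) * q + x).
  transitivity ((m%:Z - 2) * (x * (x - 1)) + 2 * x); first by ring.
  by rewrite Hq; ring.
have : 0 <= x * (x - 1).
  have [x0|x1] : x <= 0 \/ 1 <= x by lia.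
    by apply: mulr_le0; lia.
  by apply: mulr_ge0; lia.
by rewrite Hq; nia.
Qed.

Lemma QcosetZ_decomp m a1 a2 a3 x1 x2 x3 : (3 <= m)%N ->
  exists2 h, QcosetZ m a1 a2 a3 x1 x2 x3 = coset_scale m * h + coset_offset m a1 a2 a3
           & 0 <= h.
Proof.
move=> m3.
have [h1 E1 P1] := polygonal_int_ge0 x1 m3; have [h2 E2 P2] := polygonal_int_ge0 x2 m3.
have [h3 E3 P3] := polygonal_int_ge0 x3 m3.
exists (a1%:Z * h1 + a2%:Z * h2 + a3%:Z * h3); last by nia.
have := QcosetZ_twofZ m a1 a2 a3 x1 x2 x3; rewrite /twofZ /= E1 E2 E3; lia.
Qed.

Lemma Qcoset_QcosetZ m a1 a2 a3 x1 x2 x3 : (3 <= m)%N ->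
  Qcoset m a1 a2 a3 x1 x2 x3 = (QcosetZ m a1 a2 a3 x1 x2 x3)%:~R.
Proof.
move=> m3; have c0 : (cc m)%:~R != 0 :> rat by rewrite intr_eq0 gt_eqF ?cc_gt0.
have E (a : nat) (x : int) : a%:R * (cc m)%:~R ^+ 2 * (x%:~R + vcoord m) ^+ 2
    = (a%:Z * (cc m * x - dd m) ^+ 2)%:~R :> rat.
  by rewrite /vcoord intrM rmorphXn rmorphB rmorphM /=; field.
by rewrite /Qcoset /QL /QcosetZ /= !E !rmorphD.
Qed.

Lemma fm_twofZ m a1 a2 a3 x1 x2 x3 :
  2 * fm m a1 a2 a3 x1%:~R x2%:~R x3%:~R = (twofZ m a1 a2 a3 x1 x2 x3)%:~R :> rat.
Proof.
rewrite /fm /Pm /twofZ /= !(rmorphD, rmorphB, rmorphN, rmorphM, rmorphXn) /= !rmorph1.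
by field.
Qed.

Lemma coset_min_offset m a1 a2 a3 : (3 <= m)%N ->
  coset_min m a1 a2 a3 (coset_offset m a1 a2 a3)%:~R.
Proof.
move=> m3; split.
  by exists 0, 0, 0; rewrite Qcoset_QcosetZ // /QcosetZ /coset_offset; congr _%:~R; ring.
move=> x1 x2 x3; rewrite Qcoset_QcosetZ // ler_int.
have [h -> h0] := QcosetZ_decomp a1 a2 a3 x1 x2 x3 m3.
by have := coset_scale_gt0 m3; nia.
Qed.

Lemma coset_min_unique m a1 a2 a3 mu mu' :
  coset_min m a1 a2 a3 mu -> coset_min m a1 a2 a3 mu' -> mu = mu'.
Proof.
move=> [[x1 [x2 [x3 <-]]] le_mu] [[y1 [y2 [y3 <-]]] le_mu'].
by apply/le_anti; rewrite le_mu le_mu'.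
Qed.

Lemma padic_seq_shift p x e : padic_seq p x -> padic_seq p (fun j => x (j + e)%N).
Proof.
move=> Hx j /=; rewrite addSn; have := Hx (j + e)%N; rewrite !eqz_mod_dvd.
by apply: dvdz_trans; rewrite dvdzE /= dvdn_exp2l // leq_addr.
Qed.

Lemma dvdz_pfactor_cancel p (C t : int) j : prime p -> C != 0 ->
  ((p ^ (j + logn p `|C|))%:Z %| C * t)%Z -> ((p ^ j)%:Z %| t)%Z.
Proof.
move=> pp C0; have /(pfactor_coprime pp)[u cu Eu] : (0 < `|C|)%N by rewrite absz_gt0.
set e := logn p `|C| in Eu *.
rewrite !dvdzE /= abszM Eu expnD mulnAC dvdn_pmul2r ?expn_gt0 ?prime_gt0 //.
by rewrite Gauss_dvdr // coprimeXl // coprime_sym.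
Qed.

(* Multiplying by C costs only the finitely many p-adic digits that C absorbs. *)
Lemma padic_solvable3_transfer p (F G : int -> int -> int -> int) (n n' C K : int) :
  prime p -> C != 0 ->
  (forall x1 x2 x3, C * (G x1 x2 x3 - n') = K * (F x1 x2 x3 - n)) ->
  padic_solvable3 p F n -> padic_solvable3 p G n'.
Proof.
move=> pp C0 eqFG [x1 [x2 [x3 [s1 s2 s3 solF]]]].
pose e := logn p `|C|.
exists (fun j => x1 (j + e)%N), (fun j => x2 (j + e)%N), (fun j => x3 (j + e)%N).
split; try exact: padic_seq_shift.
move=> j; rewrite eqz_mod_dvd; apply: (dvdz_pfactor_cancel pp C0).
by rewrite eqFG dvdz_mull // -eqz_mod_dvd.
Qed.

Lemma dvdz_of_padic_solvable3 (F : int -> int -> int -> int) (C D n : int) :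
  C != 0 -> (forall x1 x2 x3, (C %| F x1 x2 x3 - D)%Z) ->
  (forall p, prime p -> padic_solvable3 p F n) -> (C %| n - D)%Z.
Proof.
move=> C0 dvdF solF; rewrite dvdzE; apply/dvdn_partP; first by rewrite absz_gt0.
move=> p; rewrite mem_primes => /andP[pp _]; rewrite p_part.
suff : ((p ^ logn p `|C|)%:Z %| n - D)%Z by rewrite dvdzE.
have [x1 [x2 [x3 [_ _ _ /(_ (logn p `|C|))]]]] := solF p pp.
set y := F _ _ _; rewrite eqz_mod_dvd => dvd_n.
have dvdC : ((p ^ logn p `|C|)%:Z %| C)%Z by rewrite dvdzE /= pfactor_dvdnn.
have -> : n - D = (y - D) - (y - n) by ring.
by rewrite rpredB // (dvdz_trans dvdC (dvdF _ _ _)).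
Qed.

Section Correspondence.
Context {m a1 a2 a3 : nat}.
Hypothesis m3 : (3 <= m)%N.

Local Notation C := (coset_scale m).
Local Notation D := (coset_offset m a1 a2 a3).

Lemma coset_scale_neq0 : C != 0.
Proof. by rewrite gt_eqF ?coset_scale_gt0. Qed.

Lemma QcosetZ_eq_twofZ (k x1 x2 x3 : int) :
  QcosetZ m a1 a2 a3 x1 x2 x3 = C * k + D <-> twofZ m a1 a2 a3 x1 x2 x3 = 2 * k.
Proof.
have := QcosetZ_twofZ m a1 a2 a3 x1 x2 x3; have := coset_scale_gt0 m3.
by split=> E; nia.
Qed.

Lemma f_represents_coset (k : nat) :
  f_represents m a1 a2 a3 k <-> coset_represents m a1 a2 a3 (C * k%:Z + D).
Proof.
split=> -[x1 [x2 [x3 E]]]; exists x1, x2, x3.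
  rewrite Qcoset_QcosetZ //; congr _%:~R; apply/QcosetZ_eq_twofZ/(@intr_inj rat).
  by rewrite -fm_twofZ E rmorphM.
apply: (@mulfI _ (2 : rat)) => //; rewrite fm_twofZ.
have /QcosetZ_eq_twofZ -> : QcosetZ m a1 a2 a3 x1 x2 x3 = C * k%:Z + D.
  by apply: (@intr_inj rat); rewrite -Qcoset_QcosetZ.
by rewrite rmorphM.
Qed.

Lemma f_locally_represents_coset : (0 < a1)%N -> forall k : nat,
  f_locally_represents m a1 a2 a3 k <-> coset_locally_represents m a1 a2 a3 (C * k%:Z + D).
Proof.
move=> a1_gt0 k; have eqQf x1 x2 x3 : 2 * (QcosetZ m a1 a2 a3 x1 x2 x3 - (C * k%:Z + D))
    = C * (twofZ m a1 a2 a3 x1 x2 x3 - 2 * k%:Z).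
  by have := QcosetZ_twofZ m a1 a2 a3 x1 x2 x3; lia.
split=> [[_ solf] p pp | solQ].
  exact: (padic_solvable3_transfer pp _ eqQf (solf p pp)).
split=> [|p pp]; first exact: real_solvable_fm m3 a1_gt0.
apply: (padic_solvable3_transfer pp coset_scale_neq0 _ (solQ p pp)).
by move=> x1 x2 x3; rewrite -eqQf.
Qed.

Lemma coset_locally_represents_offset (n : int) :
  D <= n -> coset_locally_represents m a1 a2 a3 n -> exists k : nat, n = C * k%:Z + D.
Proof.
move=> le_Dn solQ.
have /dvdzP[k Ek] : (C %| n - D)%Z.
  apply: (dvdz_of_padic_solvable3 coset_scale_neq0 _ solQ) => x1 x2 x3.
  have [h -> _] := QcosetZ_decomp a1 a2 a3 x1 x2 x3 m3.
  by rewrite addrK; apply/dvdz_mulr/dvdzz.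
have := coset_scale_gt0 m3; exists `|k|%N; nia.
Qed.

End Correspondence.

Theorem proposition3p1 (m a1 a2 a3 : nat) :
  (3 <= m)%N -> (0 < a1)%N -> (0 < a2)%N -> (0 < a3)%N ->
  f_regular m a1 a2 a3 <-> coset_tight_regular m a1 a2 a3.
Proof.
move=> m3 a1_gt0 _ _; have minD := coset_min_offset a1 a2 a3 m3.
split=> [f_reg mu n min_mu | coset_reg k].
  rewrite (coset_min_unique min_mu minD) ler_int => le_Dn loc_n.
  have [k Ek] := coset_locally_represents_offset m3 le_Dn loc_n.
  move: loc_n; rewrite Ek => /(f_locally_represents_coset m3 a1_gt0) /f_reg.
  by move/(f_represents_coset m3).
move=> /(f_locally_represents_coset m3 a1_gt0) loc_k.
apply/(f_represents_coset m3)/(coset_reg _ _ minD _ loc_k).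
by rewrite ler_int; have := coset_scale_gt0 m3; nia.
Qed.
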